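(* Let $p$ be a prime and let $G$ be a nontrivial finite $p$-group. Then $n_G=\exp(G)$ if and only if $G$ is cyclic, or $\exp(G)=p$, or $G$ is a dihedral $2$-group, i.e. $G\cong D_{2^{m+1}}=\langle x,y \mid x^{2^{m}}=y^2=1,\ x^y=x^{-1}\rangle$ for some integer $m\ge 1$.
   Context: For a finite group $G$ and $x\in G$, let $I_{\mathcal C}(x)=\{y\in G : \langle x,y\rangle \text{ is cyclic}\}$ (the closed neighborhood of $x$ in the enhanced power graph of $G$; it contains $1$ and $x$). For a nontrivial finite group $G$, $n_G=\max\{|I_{\mathcal C}(x)| : x\in G\setminus\{1\}\}$. $\exp(G)$ denotes the exponent of $G$. *)

From mathcomp Require Import all_boot all_fingroup all_solvable.
Set Implicit Arguments. Unset Strict Implicit. Unset Printing Implicit Defensive.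
Local Open Scope group_scope.

Definition IC (gT : finGroupType) (G : {set gT}) (x : gT) : {set gT} :=
  [set y in G | cyclic <<[set x; y]>>].

Definition nG (gT : finGroupType) (G : {set gT}) : nat :=
  \max_(x in G^#) #|IC G x|.

From mathcomp Require Import all_boot all_fingroup all_solvable.
From mathcomp Require Import zify.
Set Implicit Arguments. Unset Strict Implicit. Unset Printing Implicit Defensive.
Local Open Scope group_scope.

(* Since <[w]> is contained in I_C(w), n_G >= exp(G); for cyclic groups, groups of exponent p
   and dihedral 2-groups the reverse bound is read off the element structure.
   Conversely, let g have order exp(G) = p^e with e >= 2. Then #|I_C(u)| <= #[g] for every
   u in <[g]>^#, so no element outside <[g]> has a nontrivial power inside <[g]>. If y
   normalizes <[g]>, y \notin <[g]>, y^p \in <[g]> and g^(y^-1) = g^k, applying this to y and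
   to g y gives y^p = 1 and p^e | 1 + k + ... + k^(p-1); as k = 1 mod p this forces p = 2 and
   g^y = g^-1. An element of the normalizer whose square inverts g would give k^2 = -1 mod 4,
   so every element of 'N_G(<[g]>) outside <[g]> is an involution inverting g. If t normalized
   'N_G(<[g]>) but not <[g]>, g^t would be such an involution, which its order forbids; so by
   normalizer growth in nilpotent groups G normalizes <[g]>. The product of two elements outside
   <[g]> then centralizes g, hence lies in <[g]>, and G is generated by the involutions y, g y. *)

Lemma sum_powers_not_dvd_sq p k : prime p -> odd p -> k = 1 %[mod p] ->
  ~~ (p ^ 2 %| \sum_(j < p) k ^ j)%N.
Proof.
move=> pr_p odd_p k1; have p_gt1 := prime_gt1 pr_p.
have [a ka] : exists a, k = (a * p + 1)%N.
  by exists (k %/ p)%N; rewrite {1}(divn_eq k p) k1 modn_small.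
have pow_mod j : exists c, (k ^ j = 1 + j * a * p + p * p * c)%N.
  elim: j => [|j [c kj]]; first by exists 0%N; rewrite expn0; lia.
  by exists (j * a * a + c * (a * p + 1))%N; rewrite expnSr kj ka; nia.
have sum_mod n : exists d, (\sum_(j < n) k ^ j = n + a * p * 'C(n, 2) + p * p * d)%N.
  elim: n => [|n [d sum_n]]; first by exists 0%N; rewrite big_ord0 bin0n; lia.
  have [c kn] := pow_mod n.
  by exists (d + c)%N; rewrite big_ord_recr /= sum_n kn binS bin1; nia.
have [d ->] := sum_mod p; rewrite bin2odd // -mulnn.
have -> : (p + a * p * (p * p.-1./2) + p * p * d = p + p * p * (a * p.-1./2 + d))%N.
  by nia.
rewrite dvdn_addl; last exact: dvdn_mulr.
by apply/negP => /(dvdn_leq (ltnW p_gt1)); nia.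
Qed.

Lemma sqr_add1_not_dvd4 k : ~~ (4 %| k ^ 2 + 1)%N.
Proof.
apply/negP => /dvdnP[t kt].
have := divn_eq k 2; have := ltn_pmod k (isT : 0 < 2)%N.
move: (k %/ 2)%N (k %% 2)%N => q b b_lt2 kqb.
rewrite -mulnn in kt; nia.
Qed.

Section EnhancedPowerGraph.
Variable gT : finGroupType.
Implicit Types (G : {group gT}) (g t u w x y : gT).

Lemma IC_sub G x : IC G x \subset G.
Proof. by apply/subsetP=> y /setIdP[]. Qed.

Lemma IC_sym G x y : x \in G -> y \in IC G x -> x \in IC G y.
Proof. by move=> xG /setIdP[_ cxy]; rewrite inE xG setUC. Qed.

Lemma cycle_sub_IC G g u : g \in G -> u \in <[g]> -> <[g]> \subset IC G u.
Proof.
move=> gG ug; apply/subsetP=> v vg; rewrite inE (subsetP _ v vg) ?cycle_subG //=.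
by apply: cyclicS (cycle_cyclic g); rewrite gen_subG subUset !sub1set ug vg.
Qed.

Lemma IC_commute G x y : y \in IC G x -> commute x y.
Proof.
case/setIdP=> _ /cyclic_abelian/centsP cxy.
by apply: cxy; rewrite mem_gen ?set21 ?set22.
Qed.

Lemma IC_involution_eq G x y : y \in IC G x -> #[x] = 2 -> #[y] = 2 -> y = x.
Proof.
case/setIdP=> _ cxy ox oy; set C := <<[set x; y]>> in cxy.
have [xC yC] : x \in C /\ y \in C by rewrite !mem_gen ?set21 ?set22.
have /eqP eq_xy : <[x]> :==: <[y]>.
  by rewrite (eq_subG_cyclic cxy) ?cycle_subG // -!orderE ox oy.
have : y \in <[x]> by rewrite eq_xy cycle_id.
rewrite cycle2g // !inE => /predU1P[y1|/eqP //].
by move: oy; rewrite y1 order1.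
Qed.

Lemma IC_inverted_eq G x t :
  t \in IC G x -> x ^ t = x^-1 -> x != 1 -> #[t] = 2 -> t = x.
Proof.
move=> tx xt x1 ot; have xV : x^-1 = x by rewrite -xt /conjg (IC_commute tx) mulKg.
by apply: IC_involution_eq tx _ ot; apply: nt_prime_order; rewrite // expg2 -{2}xV mulgV.
Qed.

Lemma leq_IC_nG G x : x \in G^# -> #|IC G x| <= nG G.
Proof. exact: leq_bigmax_cond. Qed.

Lemma nG_le G n : {in G^#, forall x, #|IC G x| <= n} -> nG G <= n.
Proof. by move/bigmax_leqP. Qed.

Lemma exponent_le_nG G : G :!=: 1 -> nilpotent G -> exponent G <= nG G.
Proof.
move=> ntG nilG; have [g gG eg] := exponent_witness nilG.
have g1 : g != 1 by apply: contra ntG => /eqP g1; rewrite trivg_exponent eg g1 order1.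
rewrite eg (leq_trans _ (leq_IC_nG (_ : g \in G^#))) ?inE ?g1 //.
by rewrite orderE subset_leq_card ?cycle_sub_IC ?cycle_id.
Qed.

Lemma nG_le_card G : nG G <= #|G|.
Proof. by apply: nG_le => x _; rewrite subset_leq_card ?IC_sub. Qed.

Lemma nG_le_prime_exponent G p : prime p -> exponent G = p -> nG G <= p.
Proof.
move=> pr_p eG; apply: nG_le => w /setD1P[w1 wG].
have ow : #[w] = p by apply: nt_prime_order; rewrite // -eG expg_exponent.
rewrite -ow orderE subset_leq_card //; apply/subsetP=> y /setIdP[yG cwy].
set C := <<[set w; y]>> in cwy.
have sCG : C \subset G by rewrite gen_subG subUset !sub1set wG yG.
have /eqP-> : <[w]> == C.
  rewrite eqEcard cycle_subG mem_gen ?set21 //= -orderE ow -eG -(exponent_cyclic cwy).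
  by rewrite dvdn_leq ?exponent_gt0 ?exponentS.
by rewrite mem_gen ?set22.
Qed.

Lemma nG_le_inverted_cycle G x :
    x != 1 -> {in G :\: <[x]>, forall t, #[t] = 2} ->
    {in <[x]> & G :\: <[x]>, forall z t, z ^ t = z^-1} ->
  nG G <= #[x].
Proof.
move=> x1 invol inv; apply: nG_le => w /setD1P[w1 wG].
have [wX | wX] := boolP (w \in <[x]>).
  rewrite orderE subset_leq_card //; apply/subsetP=> t tw; apply: contraT => tX.
  have tGX : t \in G :\: <[x]> by rewrite inE tX (subsetP (IC_sub G w)).
  by rewrite (IC_inverted_eq tw (inv w t wX tGX) w1 (invol t tGX)) wX in tX.
have wGX : w \in G :\: <[x]> by rewrite inE wX.
apply: (@leq_trans #|[set 1; w]|).
  2: by rewrite cards2 (leq_ltn_trans (leq_b1 _)) ?order_gt1.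
apply/subset_leq_card/subsetP=> t tw; rewrite !inE.
have [-> // | t1] := eqVneq t 1; apply/eqP.
have [tX | tX] := boolP (t \in <[x]>); last first.
  have tGX : t \in G :\: <[x]> by rewrite inE tX (subsetP (IC_sub G w)).
  exact: IC_involution_eq tw (invol w wGX) (invol t tGX).
have wt := IC_sym wG tw.
by rewrite (IC_inverted_eq wt (inv t w tX wGX) t1 (invol w wGX)) tX in wX.
Qed.

Lemma nG_le_exponent_dihedral2 G m :
  1 <= m -> G \isog 'D_(2 ^ m.+1) -> nG G <= exponent G.
Proof.
move=> m_gt0 isoG; have m1_gt1 : 1 < m.+1 by [].
have [[x y] genG _] := generators_2dihedral m1_gt1 isoG.
have [_ xG ox _] := genG.
have [[_ invol inv] _ _ _ _] := dihedral2_structure m1_gt1 genG isoG.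
apply: leq_trans (dvdn_leq (exponent_gt0 G) (dvdn_exponent xG)).
by apply: nG_le_inverted_cycle invol inv; rewrite -order_gt1 ox (ltn_exp2l 0).
Qed.

Lemma conjg_exp_power x a k n : x ^ a = x ^+ k -> x ^ (a ^+ n) = x ^+ (k ^ n).
Proof.
move=> xa; elim: n => [|n IHn]; first by rewrite expg0 conjg1 expn0 expg1.
by rewrite expgSr conjgM IHn conjXg xa -expgM expnS.
Qed.

Lemma expMg_twisted x y k n :
  x ^ y^-1 = x ^+ k -> (x * y) ^+ n = x ^+ (\sum_(j < n) k ^ j) * y ^+ n.
Proof.
move=> xy; elim: n => [|n IHn]; first by rewrite !expg0 big_ord0 mulg1.
have yx : y ^+ n * x = x ^+ (k ^ n) * y ^+ n.
  by rewrite -(conjg_exp_power n xy) expgVn /conjg invgK -!mulgA mulVg mulg1.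
rewrite expgSr IHn big_ord_recr /= expgD -!mulgA; congr (_ * _).
by rewrite !mulgA yx -!mulgA expgSr.
Qed.

Lemma normalizer_cycle_conj g y : y \in 'N(<[g]>) -> exists k, g ^ y = g ^+ k.
Proof. by move=> nXy; apply/cycleP; rewrite memJ_norm ?cycle_id. Qed.

Lemma conj_sqr_neq_inv g w : (4 %| #[g])%N -> w \in 'N(<[g]>) -> g ^ (w ^+ 2) != g^-1.
Proof.
move=> g4 nXw; have [k gw] := normalizer_cycle_conj nXw.
rewrite (conjg_exp_power 2 gw); apply/eqP => gk2.
case/negP: (sqr_add1_not_dvd4 k); apply: dvdn_trans g4 _.
by rewrite order_dvdn expgD gk2 mulVg.
Qed.

Lemma pelt_exit_power (p : nat) (A : {set gT}) h : p.-elt h -> 1 \in A -> h \notin A ->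
  exists j, (h ^+ (p ^ j) \notin A) && (h ^+ (p ^ j.+1) \in A).
Proof.
move=> ph A1 hA; have [a oh] := p_natP ph.
have : h ^+ (p ^ a) \in A by rewrite -oh expg_order.
elim: a {oh} => [|a IHa] hpa; first by rewrite expn0 expg1 (negPf hA) in hpa.
have [hpaA | hpaN] := boolP (h ^+ (p ^ a) \in A); first exact: IHa.
by exists a; rewrite hpaN.
Qed.

End EnhancedPowerGraph.

Section MaximalCycle.
Variables (gT : finGroupType) (G : {group gT}) (g : gT).
Hypotheses (gG : g \in G) (nG_le_g : nG G <= #[g]).

Lemma expg_outside_cycle y n :
  y \in G -> y \notin <[g]> -> y ^+ n \in <[g]> -> y ^+ n = 1.
Proof.
move=> yG ygN yng; apply/eqP; apply: contraR ygN => yn1.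
have ynG : y ^+ n \in G^# by rewrite !inE yn1 groupX.
have sub : y |: <[g]> \subset IC G (y ^+ n).
  rewrite subUset sub1set cycle_sub_IC // andbT.
  by rewrite (subsetP (cycle_sub_IC yG (mem_cycle y n))) ?cycle_id.
have := leq_trans (subset_leq_card sub) (leq_trans (leq_IC_nG ynG) nG_le_g).
by rewrite cardsU1 -orderE; case: (y \in <[g]>); rewrite ?add1n ?ltnn.
Qed.

Variable p : nat.
Hypotheses (pr_p : prime p) (pG : p.-group G) (p2_dvd_g : (p ^ 2 %| #[g])%N).

Let sqr_g_neq1 : g ^+ 2 != 1.
Proof.
have le4p2 : (2 ^ 2 <= p ^ 2)%N by rewrite leq_exp2r ?prime_gt1.
have le4g := leq_trans le4p2 (dvdn_leq (order_gt0 g) p2_dvd_g).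
rewrite -order_dvdn; apply: contraL le4g => /(dvdn_leq (isT : 0 < 2)) le_g2.
by rewrite -ltnNge (leq_ltn_trans le_g2).
Qed.

Lemma normalizer_root_inverts y :
    y \in 'N_G(<[g]>) -> y \notin <[g]> -> y ^+ p \in <[g]> ->
  [/\ p = 2, y ^+ 2 = 1 & g ^ y = g^-1].
Proof.
case/setIP=> yG nXy yX ypX.
have yp1 : y ^+ p = 1 := expg_outside_cycle yG yX ypX.
have [k gk] := normalizer_cycle_conj (groupVr nXy).
have g_dvd_sum : (#[g] %| \sum_(j < p) k ^ j)%N.
  have gyX : g * y \notin <[g]> by rewrite groupMl ?cycle_id.
  have gyp := expMg_twisted p gk; rewrite yp1 mulg1 in gyp.
  rewrite order_dvdn -gyp; apply/eqP/(expg_outside_cycle (groupM gG yG) gyX).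
  by rewrite gyp mem_cycle.
have kp1 : k ^ p = 1 %[mod p].
  have := conjg_exp_power p gk; rewrite expgVn yp1 invg1 conjg1 => /eqP.
  rewrite -{1}(expg1 g) eq_expg_mod_order => /eqP/(congr1 (modn^~ p)).
  by rewrite !modn_dvdm // (dvdn_trans (dvdn_exp2l p (isT : 1 <= 2))).
have p2 : p = 2.
  have [// | odd_p] := even_prime pr_p.
  have k1 : k = 1 %[mod p] by rewrite -(fermat_little k pr_p).
  by case/negP: (sum_powers_not_dvd_sq pr_p odd_p k1); apply: dvdn_trans g_dvd_sum.
rewrite p2 in yp1 g_dvd_sum; split=> //.
have yV : y^-1 = y by apply/eqP; rewrite eq_invg_mul -expg2 yp1.
move: g_dvd_sum; rewrite !big_ord_recr big_ord0 /= expn0 expn1 add0n add1n.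
rewrite -yV gk order_dvdn expgS => /eqP gk1.
by rewrite -[g^-1]mulg1 -gk1 mulKg.
Qed.

Lemma normalizer_outside_inverts h :
    h \in 'N_G(<[g]>) -> h \notin <[g]> ->
  [/\ p = 2, h ^+ 2 = 1 & g ^ h = g^-1].
Proof.
move=> hN hX; have /setIP[hG nXh] := hN.
have [j /andP[vX v2X]] := pelt_exit_power (mem_p_elt pG hG) (group1 _) hX.
have vN : h ^+ (p ^ j) \in 'N_G(<[g]>) by rewrite groupX.
rewrite expnSr expgM in v2X.
have [p2 v2 gv] := normalizer_root_inverts vN vX v2X.
case: j {vX v2X vN} => [|i] in v2 gv *; first by rewrite expn0 expg1 in v2 gv.
have g4 : (4 %| #[g])%N by move: p2_dvd_g; rewrite p2.
case/negP: (conj_sqr_neq_inv g4 (groupX (2 ^ i) nXh)).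
by rewrite -expgM -expnSr -p2 gv.
Qed.

Lemma cycle_normal : G \subset 'N(<[g]>).
Proof.
apply: contraT => notN.
have NG : 'N_G(<[g]>) \proper G by rewrite properE subsetIl subsetI subxx notN.
have [_ [t /setIP[tG nNt] tN]] := properP (nilpotent_proper_norm (pgroup_nil pG) NG).
have gN : g \in 'N_G(<[g]>) by rewrite inE gG (subsetP (normG _)) ?cycle_id.
have gtN : g ^ t \in 'N_G(<[g]>) by rewrite memJ_norm.
have [gtX | gtX] := boolP (g ^ t \in <[g]>).
  case/negP: tN; rewrite inE tG /=; apply/normP; rewrite -cycleJ.
  by apply/eqP; rewrite eqEcard cycle_subG gtX -!orderE orderJ /=.
have [_ gt2 _] := normalizer_outside_inverts gtN gtX.
by move/eqP: gt2; rewrite -conjXg conjg_eq1 (negPf sqr_g_neq1).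
Qed.

Let in_normalizer h : h \in G -> h \in 'N_G(<[g]>).
Proof. by move=> hG; rewrite inE hG (subsetP cycle_normal). Qed.

Lemma mul_outside_cycle h1 h2 :
  h1 \in G :\: <[g]> -> h2 \in G :\: <[g]> -> h1 * h2 \in <[g]>.
Proof.
case/setDP=> h1G h1X /setDP[h2G h2X]; apply: contraR sqr_g_neq1 => h12X.
have [_ _ g12] := normalizer_outside_inverts (in_normalizer (groupM h1G h2G)) h12X.
have [_ _ g1] := normalizer_outside_inverts (in_normalizer h1G) h1X.
have [_ _ g2] := normalizer_outside_inverts (in_normalizer h2G) h2X.
move: g12; rewrite conjgM g1 conjVg g2 invgK => /eqP.
by rewrite eq_sym eq_invg_mul -expg2 => ->.
Qed.

Lemma dihedral_of_maximal_cycle :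
  ~~ cyclic G -> exists2 m, 1 <= m & G \isog 'D_(2 ^ m.+1).
Proof.
move=> ncG; have [y yG yX] : exists2 y, y \in G & y \notin <[g]>.
  by apply/subsetPn; apply: contra ncG => /cyclicS->; rewrite ?cycle_cyclic.
have yGX : y \in G :\: <[g]> by rewrite inE yX.
have gyX : g * y \notin <[g]> by rewrite groupMl ?cycle_id.
have [p2 y2 _] := normalizer_outside_inverts (in_normalizer yG) yX.
have [_ gy2 _] := normalizer_outside_inverts (in_normalizer (groupM gG yG)) gyX.
have oy : #[y] = 2 by apply: nt_prime_order (group1_contra yX).
have ogy : #[g * y] = 2 by apply: nt_prime_order (group1_contra gyX).
have y_neq_gy : y != g * y.
  rewrite -{1}(mul1g y) (inj_eq (mulIg y)) eq_sym.
  by apply: contraNneq sqr_g_neq1 => ->; rewrite expg1n.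
have defG : <<[set y; g * y]>> = G.
  apply/eqP; rewrite eqEsubset gen_subG subUset !sub1set yG groupM //=.
  have gH : g \in <<[set y; g * y]>>.
    have := groupM (mem_gen (set22 y (g * y))) (groupVr (mem_gen (set21 y (g * y)))).
    by rewrite mulgK.
  have sXH : <[g]> \subset <<[set y; g * y]>> by rewrite cycle_subG.
  apply/subsetP=> h hG; have [hX | hX] := boolP (h \in <[g]>).
    exact: subsetP sXH h hX.
  have hyX : h * y \in <[g]> by rewrite mul_outside_cycle // inE hX.
  by rewrite -(mulgK y h) groupM ?groupV ?(subsetP sXH (h * y) hyX) ?mem_gen ?set21.
have [n oG] : {n | #|G| = 2 ^ n}%N by apply: p_natP; rewrite -p2.
have n_gt1 : 1 < n.
  have : (p ^ 2 <= #|G|)%N.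
    apply: leq_trans (dvdn_leq (order_gt0 g) p2_dvd_g) _.
    exact: dvdn_leq (cardG_gt0 G) (order_dvdG gG).
  by rewrite oG p2 leq_exp2l.
exists n.-1; first by rewrite -ltnS prednK // ltnW.
have := involutions_gen_dihedral oy ogy y_neq_gy.
by rewrite /= defG oG prednK // ltnW.
Qed.

End MaximalCycle.

Lemma pgroup_exponent_sq_dvd (gT : finGroupType) (p : nat) (G : {group gT}) :
  p.-group G -> G :!=: 1 -> exponent G != p -> (p ^ 2 %| exponent G)%N.
Proof.
move=> pG; rewrite trivg_exponent; have := pnat_exponent p G.
rewrite pG => /p_natP[[|[|e]] ->] //; first by rewrite expn1 eqxx.
by rewrite dvdn_exp2l.
Qed.

Theorem theorem1p1 (p : nat) (gT : finGroupType) (G : {group gT}) :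
  prime p -> p.-group G -> G :!=: 1 ->
  (nG G = exponent G <->
   [\/ cyclic G, exponent G = p
     | exists2 m : nat, 1 <= m & G \isog 'D_(2 ^ m.+1)]).
Proof.
move=> pr_p pG ntG; have nilG := pgroup_nil pG.
split=> [nGE | cases].
  have [cG | ncG] := boolP (cyclic G); first exact: Or31.
  have [eGp | neGp] := eqVneq (exponent G) p; first exact: Or32.
  have [g gG og] := exponent_witness nilG.
  apply: Or33; apply: (dihedral_of_maximal_cycle gG _ pr_p pG) => //.
    by rewrite nGE og.
  by rewrite -og pgroup_exponent_sq_dvd.
apply/eqP; rewrite eqn_leq exponent_le_nG // andbT.
case: cases => [cG | eGp | [m m_gt0 isoG]].
- by rewrite exponent_cyclic ?nG_le_card.
- by rewrite eGp nG_le_prime_exponent.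
- exact: nG_le_exponent_dihedral2 m_gt0 isoG.
Qed.
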